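(* Let $\mu=(p,q,r,s)\in\mathbb{C}^4$ and $\phi\in\Phi_\mu$. Suppose $X\in\Omega_1$, $Y\in\Omega_2$, $Z\in\Omega_3$ meet at a vertex $v$, and the arrows assigned by $\phi$ on the edges $X\cap Y$ and $X\cap Z$ both point away from $v$. Then, writing $x=\phi(X),y=\phi(Y),z=\phi(Z)$, at least one of the following holds: $|x|\le 2+\frac{|q|+|r|}{4}$; $|y|<2$; $|z|<2$.
   Context: Let $\Sigma$ be a countably infinite simplicial tree, properly embedded in the plane, all of whose vertices have degree $3$. A complementary region is the closure of a connected component of the complement of $\Sigma$; $\Omega$ is the set of complementary regions, $E(\Sigma)$ the set of edges. Every edge $e$ is the intersection of exactly two regions $X,Y$, and its two endpoints lie on two further regions $Z,W$ respectively; write $e\leftrightarrow(X,Y;Z,W)$. Three regions meet at each vertex. Fix a coloring $\mathcal C:\Omega\cup E(\Sigma)\to\{1,2,3\}$ such that for every $e\leftrightarrow(X,Y;Z,W)$, $\mathcal C(e)=\mathcal C(Z)=\mathcal C(W)$ and $\mathcal C(e),\mathcal C(X),\mathcal C(Y)$ are pairwise distinct; $\Omega_i$, $E_i$ denote regions/edges of color $i$. For $\mu=(p,q,r,s)\in\mathbb{C}^4$, a $\mu$-Markoff map is $\phi:\Omega\to\mathbb{C}$ such that (i) at every vertex with regions $X\in\Omega_1,Y\in\Omega_2,Z\in\Omega_3$, $x^2+y^2+z^2+xyz=px+qy+rz+s$ where $x=\phi(X)$, etc.; (ii) for $e\in E_1$, $e\leftrightarrow(Y,Z;X,X')$: $\phi(X)+\phi(X')=p-\phi(Y)\phi(Z)$;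 for $e\in E_2$, $e\leftrightarrow(X,Z;Y,Y')$: $\phi(Y)+\phi(Y')=q-\phi(X)\phi(Z)$; for $e\in E_3$, $e\leftrightarrow(X,Y;Z,Z')$: $\phi(Z)+\phi(Z')=r-\phi(X)\phi(Y)$. $\Phi_\mu$ is the set of such maps. Arrows: given $\phi$ and an edge $e\leftrightarrow(X,Y;Z,W)$, orient $e$ towards its endpoint lying on $W$ if $|\phi(Z)|>|\phi(W)|$, towards its endpoint lying on $Z$ if $|\phi(Z)|<|\phi(W)|$, and arbitrarily (but fixed) if $|\phi(Z)|=|\phi(W)|$. *)

From HB Require Import structures.
From mathcomp Require Import all_boot all_order all_algebra.
From mathcomp Require Import complex.
From mathcomp Require Import Rstruct.
Set Implicit Arguments. Unset Strict Implicit. Unset Printing Implicit Defensive.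
Import Order.TTheory GRing.Theory Num.Theory.
Local Open Scope ring_scope.

Notation CC := (Rdefinitions.R[i]).

Inductive colour := colour1 | colour2 | colour3.

(* Combinatorial data of the (planar, trivalent) tree Sigma together with
   its complementary regions and the colouring C.  An edge e is recorded as
   e <-> (X,Y;Z,W): side1 e = X, side2 e = Y are the two regions whose
   intersection is e, end1 e / end2 e are its two endpoints, and
   opp1 e = Z (the further region at end1 e), opp2 e = W (at end2 e). *)
Record coloured_tree := {
  region : Type;
  vertex : Type;
  edge : Type;
  meets : vertex -> region -> Prop;
  side1 : edge -> region;
  side2 : edge -> region;
  end1 : edge -> vertex;
  end2 : edge -> vertex;
  opp1 : edge -> region;
  opp2 : edge -> region;
  rcol : region -> colour;
  ecol : edge -> colour;
  ends_distinct : forall e, end1 e <> end2 e;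
  meets_end1 : forall e, [/\ meets (end1 e) (side1 e), meets (end1 e) (side2 e)
                           & meets (end1 e) (opp1 e)];
  meets_end2 : forall e, [/\ meets (end2 e) (side1 e), meets (end2 e) (side2 e)
                           & meets (end2 e) (opp2 e)];
  three_at_vertex : forall v, exists X Y Z,
      [/\ X <> Y, Y <> Z, X <> Z &
          forall W, meets v W <-> (W = X \/ W = Y \/ W = Z)];
  colouring_opp : forall e, ecol e = rcol (opp1 e) /\ ecol e = rcol (opp2 e);
  colouring_sides : forall e, [/\ ecol e <> rcol (side1 e),
                                  ecol e <> rcol (side2 e)
                                & rcol (side1 e) <> rcol (side2 e)]
}.

Definition col_param (p q r : CC) (c : colour) : CC :=
  match c with colour1 => p | colour2 => q | colour3 => r end.

Definition markoff_map (T : coloured_tree) (p q r s : CC)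
    (phi : region T -> CC) : Prop :=
  (forall v (X Y Z : region T),
     meets v X -> meets v Y -> meets v Z ->
     rcol X = colour1 -> rcol Y = colour2 -> rcol Z = colour3 ->
     let x := phi X in let y := phi Y in let z := phi Z in
     x ^+ 2 + y ^+ 2 + z ^+ 2 + x * y * z = p * x + q * y + r * z + s) /\
  (forall e : edge T,
     phi (opp1 e) + phi (opp2 e)
       = col_param p q r (ecol e) - phi (side1 e) * phi (side2 e)).

(* An arrow assignment for phi: head e is the endpoint towards which e is
   oriented. *)
Definition arrows_of (T : coloured_tree) (phi : region T -> CC)
    (head : edge T -> vertex T) : Prop :=
  forall e : edge T,
    (head e = end1 e \/ head e = end2 e) /\
    (`|phi (opp2 e)| < `|phi (opp1 e)| -> head e = end2 e) /\
    (`|phi (opp1 e)| < `|phi (opp2 e)| -> head e = end1 e).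

Definition edge_between (T : coloured_tree) (e : edge T) (X Y : region T)
    (v : vertex T) : Prop :=
  ((side1 e = X /\ side2 e = Y) \/ (side1 e = Y /\ side2 e = X)) /\
  (end1 e = v \/ end2 e = v).

From mathcomp Require Import all_boot all_order all_algebra ring.
From mathcomp Require Import complex Rstruct.
Import Order.TTheory GRing.Theory Num.Theory.
Set Implicit Arguments. Unset Strict Implicit.
Local Open Scope ring_scope.

(* If the arrow on an edge [e <-> (A,B;C,W)] points away from the endpoint
   lying on [C], then [|w| <= |z|] with [z = phi C], [w = phi W], and the edge
   relation gives [|x| |y| = |c - z - w| <= 2 |z| + |c|].  At the vertex [v]
   both edges [X cap Y] and [X cap Z] point away, whence
   [|x| |y| <= 2 |z| + |r|] and [|x| |z| <= 2 |y| + |q|].  Adding the two and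
   using [|y| + |z| >= 4] yields [4 (|x| - 2) <= |q| + |r|]. *)

Lemma normM_le_of_edge_relation (R : numDomainType) (x y z w c : R) :
  `|w| <= `|z| -> z + w = c - x * y -> `|x| * `|y| <= 2 * `|z| + `|c|.
Proof.
move=> le_wz rel; rewrite -normrM.
have -> : x * y = c - (z + w) by rewrite rel opprB addrC subrK.
apply: (le_trans (ler_normB _ _)); rewrite addrC lerD2r mulr2n mulrDl !mul1r.
by apply: (le_trans (ler_normD _ _)); rewrite lerD2l.
Qed.

Lemma le_of_mul_le_crossed (R : numFieldType) (a b c Q P : R) :
  0 <= a -> 0 <= Q -> 0 <= P -> 2 <= b -> 2 <= c ->
  a * b <= 2 * c + P -> a * c <= 2 * b + Q -> a <= 2 + (Q + P) / 4.
Proof.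
move=> a_ge0 Q_ge0 P_ge0 b_ge2 c_ge2 le_ab le_ac.
have [a_le2|lt2a] := real_leP (ger0_real a_ge0) (realn R 2).
  by apply: (le_trans a_le2); rewrite lerDl divr_ge0 ?addr_ge0.
have sum_ge4 : 4 <= b + c by have := lerD b_ge2 c_ge2; rewrite -natrD.
have excess : (a - 2) * (b + c) <= Q + P.
  rewrite mulrBl lerBlDl mulrDr.
  have -> : 2 * (b + c) + (Q + P) = (2 * c + P) + (2 * b + Q) by ring.
  exact: lerD.
rewrite -lerBlDl ler_pdivlMr ?ltr0n //.
by apply: le_trans excess; rewrite ler_wpM2l // subr_ge0 ltW.
Qed.

Section Vertex.

Variable T : coloured_tree.

Lemma meets_vertexP (v : vertex T) (X Y Z : region T) :
  X <> Y -> Y <> Z -> X <> Z -> meets v X -> meets v Y -> meets v Z ->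
  forall W, meets v W -> W = X \/ W = Y \/ W = Z.
Proof.
move=> nXY nYZ nXZ mX mY mZ W mW.
have [A [B [C [_ _ _ meetsE]]]] := three_at_vertex v.
move: mX mY mZ mW nXY nYZ nXZ => /meetsE hX /meetsE hY /meetsE hZ /meetsE hW.
case: hX => [|[|]] ->; case: hY => [|[|]] ->; case: hZ => [|[|]] ->;
  case: hW => [|[|]] -> *; first [by left | by right; left | by right; right
                                 | congruence].
Qed.

Lemma edge_between_opp (e : edge T) (v : vertex T) (A B C : region T) :
  (forall W, meets v W -> W = A \/ W = B \/ W = C) -> edge_between e A B v ->
  (end1 e = v /\ opp1 e = C) \/ (end2 e = v /\ opp2 e = C).
Proof.
move=> at_v [sides ends].
have [nc1 nc2 _] := colouring_sides e; have [c_opp1 c_opp2] := colouring_opp e.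
have not_side O : rcol O = ecol e -> O <> A /\ O <> B.
  by move=> cO; case: sides => -[<- <-]; split=> EO; subst O; congruence.
have opp_is_C O : meets v O -> rcol O = ecol e -> O = C.
  by move=> mO /not_side[nA nB]; case: (at_v O mO) => [|[|]].
case: ends => end_v; [left | right]; split => //; apply: opp_is_C.
- by rewrite -end_v; case: (meets_end1 e).
- by rewrite c_opp1.
- by rewrite -end_v; case: (meets_end2 e).
- by rewrite c_opp2.
Qed.

Variable phi : region T -> CC.
Variable head : edge T -> vertex T.
Hypothesis arrows : arrows_of phi head.

Lemma arrow_away_end1 (e : edge T) :
  head e <> end1 e -> `|phi (opp2 e)| <= `|phi (opp1 e)|.
Proof.
move=> away; rewrite real_leNgt ?normr_real //; apply/negP => lt.
by have [_ [_ /(_ lt)]] := arrows e.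
Qed.

Lemma arrow_away_end2 (e : edge T) :
  head e <> end2 e -> `|phi (opp1 e)| <= `|phi (opp2 e)|.
Proof.
move=> away; rewrite real_leNgt ?normr_real //; apply/negP => lt.
by have [_ [/(_ lt)]] := arrows e.
Qed.

Lemma normM_le_at_tail (p q r s : CC) (e : edge T) (v : vertex T)
    (A B C : region T) :
  markoff_map p q r s phi ->
  (forall W, meets v W -> W = A \/ W = B \/ W = C) ->
  edge_between e A B v -> head e <> v ->
  `|phi A| * `|phi B| <= 2 * `|phi C| + `|col_param p q r (rcol C)|.
Proof.
move=> [_ edge_rel] at_v ebetween away.
have sidesE : `|phi A| * `|phi B| = `|phi (side1 e)| * `|phi (side2 e)|.
  by case: ebetween.1 => -[-> ->] //; rewrite mulrC.
have [c_opp1 c_opp2] := colouring_opp e.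
rewrite sidesE; case: (edge_between_opp at_v ebetween) => -[end_v <-].
- rewrite -c_opp1; apply: normM_le_of_edge_relation (edge_rel e).
  by apply: arrow_away_end1; rewrite end_v.
- rewrite -c_opp2.
  apply: normM_le_of_edge_relation (etrans (addrC _ _) (edge_rel e)).
  by apply: arrow_away_end2; rewrite end_v.
Qed.

End Vertex.

Theorem lemma3p3 (T : coloured_tree) (p q r s : CC)
  (phi : region T -> CC) (head : edge T -> vertex T)
  (v : vertex T) (X Y Z : region T) (eXY eXZ : edge T) :
  markoff_map p q r s phi ->
  arrows_of phi head ->
  rcol X = colour1 -> rcol Y = colour2 -> rcol Z = colour3 ->
  meets v X -> meets v Y -> meets v Z ->
  edge_between eXY X Y v -> edge_between eXZ X Z v ->
  head eXY <> v -> head eXZ <> v ->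
  `|phi X| <= 2 + (`|q| + `|r|) / 4 \/ `|phi Y| < 2 \/ `|phi Z| < 2.
Proof.
move=> markoff arrows cX cY cZ mX mY mZ bXY bXZ awayXY awayXZ.
have nXY : X <> Y by congruence.
have nYZ : Y <> Z by congruence.
have nXZ : X <> Z by congruence.
have at_v := meets_vertexP nXY nYZ nXZ mX mY mZ.
have at_v' W : meets v W -> W = X \/ W = Z \/ W = Y by move/at_v; tauto.
have le_XY := normM_le_at_tail arrows markoff at_v bXY awayXY.
have le_XZ := normM_le_at_tail arrows markoff at_v' bXZ awayXZ.
rewrite cZ in le_XY; rewrite cY in le_XZ.
have [|Y_ge2] := real_ltP (normr_real (phi Y)) (realn _ 2); first by right; left.
have [|Z_ge2] := real_ltP (normr_real (phi Z)) (realn _ 2); first by right; right.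
by left; apply: le_of_mul_le_crossed le_XY le_XZ; rewrite ?normr_ge0.
Qed.
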